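(* Let $\langle c^m,c^M\rangle$ be a cell of size $n$ and $i\in[n-1]$. (i) If $c^m_i<0$ then $c^M_i\leq 0$. (ii) If $c^m_i\geq 0$ then $c^M_i>0$.
   Context: A Tamari diagram of size $n$ is a word $u=u_1\cdots u_n$ of integers with $0\leq u_i\leq n-i$ and $u_{i+j}\leq u_i-j$ for all $i\in[n]$, $0\leq j\leq u_i$. A dual Tamari diagram of size $n$ is a word $v$ of integers with $0\leq v_i\leq i-1$ and $v_{i-j}\leq v_i-j$ for all $i\in[n]$, $0\leq j\leq v_i$. $(u,v)$ is a Tamari interval diagram if moreover for all $1\leq i<j\leq n$ with $j-i\leq u_i$ one has $v_j<j-i$. A cubic coordinate of size $n$ is $c\in\mathbb{Z}^{n-1}$ such that $(u,v)$ with $u_i=\max(c_i,0)$ ($i\in[n-1]$), $u_n=0$, $v_1=0$, $v_i=|\min(c_{i-1},0)|$ ($2\leq i\leq n$) is a Tamari interval diagram. For a cubic coordinate $c$ and $i\in[n-1]$, the minimal increase $\uparrow_i(c)$ is defined when there exists a cubic coordinate agreeing with $c$ outside position $i$ and with $i$-th entry $>c_i$; then $\uparrow_i(c)$ is obtained from $c$ by replacing $c_i$ by the smallest integer $t>c_i$ such that the result is a cubic coordinate. $c$ is minimal-cellular if $\uparrow_i(c)$ is defined for all $i\in[n-1]$. A cell of size $n$ is a pair $\langle c^m,c^M\rangle$ where $c^m$ is a minimal-cellular cubic coordinate of size $n$ and $c^M=\uparrow_1(\uparrow_2(\cdots(\uparrow_{n-1}(c^m))\cdots))$ (every step of this composition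 is defined). *)

(* Words are 1-indexed: position i of a word w is w i
   (for functions nat -> int) or nth 0 c (i-1) (for sequences). *)
From mathcomp Require Import all_boot all_order all_algebra.
Set Implicit Arguments. Unset Strict Implicit. Unset Printing Implicit Defensive.
Import Order.TTheory GRing.Theory Num.Theory.
Local Open Scope ring_scope.

Definition tamari_diagram (n : nat) (u : nat -> int) : Prop :=
  forall i : nat, (1 <= i <= n)%N ->
    0 <= u i /\ u i <= (n - i)%:Z /\
    (forall j : nat, j%:Z <= u i -> u (i + j)%N <= u i - j%:Z).

Definition dual_tamari_diagram (n : nat) (v : nat -> int) : Prop :=
  forall i : nat, (1 <= i <= n)%N ->
    0 <= v i /\ v i <= (i - 1)%:Z /\
    (forall j : nat, j%:Z <= v i -> v (i - j)%N <= v i - j%:Z).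

Definition tamari_interval_diagram (n : nat) (u v : nat -> int) : Prop :=
  tamari_diagram n u /\ dual_tamari_diagram n v /\
  forall i j : nat, (1 <= i)%N -> (i < j)%N -> (j <= n)%N ->
    (j - i)%:Z <= u i -> v j < (j - i)%:Z.

Definition cc (c : seq int) (i : nat) : int := nth 0 c i.-1.

Definition cu (n : nat) (c : seq int) (i : nat) : int :=
  if (i < n)%N then Num.max (cc c i) 0 else 0.

Definition cv (c : seq int) (i : nat) : int :=
  if (i <= 1)%N then 0 else `|Num.min (cc c i.-1) 0|.

Definition cubic_coordinate (n : nat) (c : seq int) : Prop :=
  size c = n.-1 /\ tamari_interval_diagram n (cu n c) (cv c).

Definition setc (c : seq int) (i : nat) (t : int) : seq int :=
  set_nth 0 c i.-1 t.

Definition up_defined (n i : nat) (c : seq int) : Prop :=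
  exists t : int, cc c i < t /\ cubic_coordinate n (setc c i t).

Definition min_incr (n i : nat) (c d : seq int) : Prop :=
  exists t : int, cc c i < t /\ cubic_coordinate n (setc c i t) /\
    (forall t' : int, cc c i < t' -> t' < t -> ~ cubic_coordinate n (setc c i t')) /\
    d = setc c i t.

Definition minimal_cellular (n : nat) (c : seq int) : Prop :=
  cubic_coordinate n c /\
  forall i : nat, (1 <= i <= n.-1)%N -> up_defined n i c.

(* up_comp n k c d : d = uparrow_1(uparrow_2(...uparrow_k(c)...)),
   every step being defined *)
Fixpoint up_comp (n k : nat) (c d : seq int) : Prop :=
  match k with
  | 0%N => d = c
  | k'.+1 => exists e, min_incr n k'.+1 c e /\ up_comp n k' e d
  end.

Definition is_cell (n : nat) (cm cM : seq int) : Prop :=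
  minimal_cellular n cm /\ up_comp n n.-1 cm cM.

(* The i-th entry is modified only once along the composition, by the
   minimal increase at position i, and at that moment it still equals
   c^m_i.  A minimal increase is strictly increasing, which gives (ii).
   For (i), replacing a negative entry by 0 leaves the Tamari diagram u
   unchanged and only zeroes one entry of the dual diagram v, so the result
   is again a cubic coordinate; hence the minimal increase of a negative
   entry never goes past 0. *)
From mathcomp Require Import all_boot all_order all_algebra.
From mathcomp Require Import zify.
Set Implicit Arguments. Unset Strict Implicit. Unset Printing Implicit Defensive.
Import Order.TTheory GRing.Theory Num.Theory.
Local Open Scope ring_scope.

Lemma size_setc c i t : (0 < i <= size c)%N -> size (setc c i t) = size c.
Proof. by move=> Hi; rewrite /setc size_set_nth; apply/maxn_idPr; lia. Qed.

Lemma cc_setc_id c i t : cc (setc c i t) i = t.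
Proof. by rewrite /cc /setc nth_set_nth /= eqxx. Qed.

Lemma cc_setc_neq c i k t :
  (0 < i)%N -> (0 < k)%N -> k != i -> cc (setc c i t) k = cc c k.
Proof.
move=> Hi Hk /eqP Hki; rewrite /cc /setc nth_set_nth /=.
by case: eqP => // Hki'; case: Hki; lia.
Qed.

Lemma tamari_diagram_eq n u u' :
  u' =1 u -> tamari_diagram n u -> tamari_diagram n u'.
Proof.
move=> Eu Hu i Hi; have [Hu0 [Hun Hdiag]] := Hu i Hi.
rewrite !Eu; split=> //; split=> // j; rewrite !Eu; exact: Hdiag.
Qed.

Section ZeroOut.

Variables (n : nat) (v v' : nat -> int).
Hypothesis v_ge0 : forall k, 0 <= v k.
Hypothesis v'_zero_out : forall k, v' k = v k \/ v' k = 0.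

Lemma zero_out_le k : v' k <= v k.
Proof. by case: (v'_zero_out k) => ->. Qed.

Lemma dual_tamari_diagram_zero_out :
  dual_tamari_diagram n v -> dual_tamari_diagram n v'.
Proof.
move=> Hv i Hi; have [_ [Hvi Hdiag]] := Hv i Hi.
case: (v'_zero_out i) => Hv'i; rewrite Hv'i.
  split; first exact: v_ge0.
  split=> // j Hj; exact: le_trans (zero_out_le _) (Hdiag j Hj).
split=> //; split=> // j Hj.
have -> : j = 0%N by lia.
by rewrite subn0 subr0 Hv'i.
Qed.

Lemma tamari_interval_diagram_zero_out u u' :
  u' =1 u -> tamari_interval_diagram n u v -> tamari_interval_diagram n u' v'.
Proof.
move=> Eu [Hu [Hv Hint]]; split; first exact: tamari_diagram_eq Hu.
split; first exact: dual_tamari_diagram_zero_out.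
move=> i j Hi Hij Hj; rewrite Eu => Hu_ij.
exact: le_lt_trans (zero_out_le j) (Hint i j Hi Hij Hj Hu_ij).
Qed.

End ZeroOut.

Lemma cu_setc_neg n c i : cc c i < 0 -> cu n (setc c i 0) =1 cu n c.
Proof.
rewrite /cu /cc /setc => Hneg k; rewrite nth_set_nth /=.
case: (k < n)%N => //; case: eqP => [-> | _] //.
by rewrite maxxx max_r // ltW.
Qed.

Lemma cv_setc0 c i k : cv (setc c i 0) k = cv c k \/ cv (setc c i 0) k = 0.
Proof.
rewrite /cv /cc /setc nth_set_nth /=; case: (k <= 1)%N; first by left.
by case: eqP => _; [right; rewrite minxx | left].
Qed.

Lemma cubic_coordinate_setc_neg n c i :
  cubic_coordinate n c -> (1 <= i <= n.-1)%N -> cc c i < 0 ->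
  cubic_coordinate n (setc c i 0).
Proof.
move=> [Hsize Hdiag] Hi Hneg; split; first by rewrite size_setc Hsize //; lia.
have cv_ge0 k : 0 <= cv c k by rewrite /cv; case: ifP.
exact: (tamari_interval_diagram_zero_out cv_ge0 (@cv_setc0 c i)
          (cu_setc_neg n Hneg) Hdiag).
Qed.

Lemma min_incr_cubic n i c d : min_incr n i c d -> cubic_coordinate n d.
Proof. by case=> t [_ [Hd [_ ->]]]. Qed.

Lemma min_incr_cc_neq n i c d k :
  min_incr n i c d -> (0 < i)%N -> (0 < k)%N -> k != i -> cc d k = cc c k.
Proof. by case=> t [_ [_ [_ ->]]]; exact: cc_setc_neq. Qed.

Lemma min_incr_pos n i c d :
  cubic_coordinate n c -> (1 <= i <= n.-1)%N -> min_incr n i c d ->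
  (0 < cc d i) = (0 <= cc c i).
Proof.
move=> Hc Hi [t [Ht [_ [Hmin ->]]]]; rewrite cc_setc_id.
apply/idP/idP => [Ht0 | Hc0]; last exact: le_lt_trans Hc0 Ht.
rewrite leNgt; apply/negP => Hneg.
by apply: (Hmin 0 Hneg Ht0); exact: cubic_coordinate_setc_neg.
Qed.

Lemma up_comp_cc_above n k c d i :
  up_comp n k c d -> (k < i)%N -> cc d i = cc c i.
Proof.
elim: k c => [|k IH] c /=; first by move=> ->.
move=> [e [He Hd]] Hki.
rewrite (IH e Hd (ltnW Hki)); apply: (min_incr_cc_neq He) => //; lia.
Qed.

Lemma up_comp_pos n k c d i :
  (k <= n.-1)%N -> cubic_coordinate n c -> up_comp n k c d ->
  (1 <= i <= k)%N -> (0 < cc d i) = (0 <= cc c i).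
Proof.
elim: k c => [|k IH] c Hk Hc /=; first by lia.
move=> [e [He Hd]] Hi.
have [Hik | Hik] := ltnP i k.+1.
- rewrite -(min_incr_cc_neq He) ?ltn_eqF //; last by lia.
  by apply: (IH e _ (min_incr_cubic He) Hd); lia.
- have -> : i = k.+1 by lia.
  rewrite (up_comp_cc_above Hd (ltnSn k)).
  by apply: min_incr_pos He => //; lia.
Qed.

Theorem lemma4p6 (n : nat) (cm cM : seq int) (i : nat) :
  is_cell n cm cM -> (1 <= i <= n.-1)%N ->
  (cc cm i < 0 -> cc cM i <= 0) /\ (0 <= cc cm i -> 0 < cc cM i).
Proof.
move=> [[Hcm _] Hup] Hi.
have Hpos := up_comp_pos (leqnn _) Hcm Hup Hi.
split=> [Hneg | Hnneg]; last by rewrite Hpos.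
by rewrite leNgt Hpos -ltNge.
Qed.
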